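(* Consider a rigid body in the director formulation with mass $m>0$ and constants $E_1,E_2,E_3>0$, configuration $(\boldsymbol{\varphi},\mathbf{d}_1,\mathbf{d}_2,\mathbf{d}_3)\in(\mathbb{R}^3)^4$ and velocities $(\mathbf{v}_{\boldsymbol{\varphi}},\mathbf{v}_{\mathbf{d}_1},\mathbf{v}_{\mathbf{d}_2},\mathbf{v}_{\mathbf{d}_3})$. Let $V\in\mathcal{C}^1(\mathbb{R}^3,\mathbb{R})$ be a potential depending only on $\boldsymbol{\varphi}$. Let the internal constraint be $$\mathbf{g}_d(\mathbf{d}_1,\mathbf{d}_2,\mathbf{d}_3)=\Big(\tfrac12(\mathbf{d}_1^\top\mathbf{d}_1-1),\tfrac12(\mathbf{d}_2^\top\mathbf{d}_2-1),\tfrac12(\mathbf{d}_3^\top\mathbf{d}_3-1),\mathbf{d}_1^\top\mathbf{d}_2,\mathbf{d}_1^\top\mathbf{d}_3,\mathbf{d}_2^\top\mathbf{d}_3\Big)\in\mathbb{R}^6,$$ and for $\boldsymbol{\lambda}=(\lambda_1,\dots,\lambda_6)\in\mathbb{R}^6$ let $\mathbf{f}^{c}_i(\mathbf{d},\boldsymbol{\lambda})\in\mathbb{R}^3$ denote the block of $\nabla\mathbf{g}_d(\mathbf{d}_1,\mathbf{d}_2,\mathbf{d}_3)^\top\boldsymbol{\lambda}$ corresponding to $\mathbf{d}_i$, i.e. $\mathbf{f}^c_1=\lambda_1\mathbf{d}_1+\lambda_4\mathbf{d}_2+\lambda_5\mathbf{d}_3$, $\mathbf{f}^c_2=\lambda_2\mathbf{d}_2+\lambda_4\mathbf{d}_1+\lambda_6\mathbf{d}_3$,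 $\mathbf{f}^c_3=\lambda_3\mathbf{d}_3+\lambda_5\mathbf{d}_1+\lambda_6\mathbf{d}_2$. Define the total angular momentum $$\mathbf{L}=\boldsymbol{\varphi}\times m\,\mathbf{v}_{\boldsymbol{\varphi}}+\sum_{i=1}^3\mathbf{d}_i\times E_i\,\mathbf{v}_{\mathbf{d}_i}.$$ Let $h>0$ and suppose states at steps $n$ and $n+1$, a multiplier $\boldsymbol{\lambda}^{n+1/2}\in\mathbb{R}^6$ and given generalized forces $\mathbf{f}_{\boldsymbol{\varphi}}^{n+1/2},\mathbf{f}_{\mathbf{d}_i}^{n+1/2}\in\mathbb{R}^3$ satisfy, with $\square^{n+1/2}:=\frac12(\square^{n+1}+\square^n)$, $$\boldsymbol{\varphi}^{n+1}-\boldsymbol{\varphi}^n=h\,\mathbf{v}_{\boldsymbol{\varphi}}^{n+1/2},\qquad \mathbf{d}_i^{n+1}-\mathbf{d}_i^n=h\,\mathbf{v}_{\mathbf{d}_i}^{n+1/2}\ (i=1,2,3),$$ $$m(\mathbf{v}_{\boldsymbol{\varphi}}^{n+1}-\mathbf{v}_{\boldsymbol{\varphi}}^n)=-h\,\nabla V(\boldsymbol{\varphi}^{n+1/2})+h\,\mathbf{f}_{\boldsymbol{\varphi}}^{n+1/2},$$ $$E_i(\mathbf{v}_{\mathbf{d}_i}^{n+1}-\mathbf{v}_{\mathbf{d}_i}^n)=-h\,\mathbf{f}^c_i(\mathbf{d}^{n+1/2},\boldsymbol{\lambda}^{n+1/2})+h\,\mathbf{f}_{\mathbf{d}_i}^{n+1/2}\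 (i=1,2,3),$$ $$\nabla\mathbf{g}_d(\mathbf{d}_1^{n+1/2},\mathbf{d}_2^{n+1/2},\mathbf{d}_3^{n+1/2})\,(\mathbf{v}_{\mathbf{d}_1}^{n+1/2},\mathbf{v}_{\mathbf{d}_2}^{n+1/2},\mathbf{v}_{\mathbf{d}_3}^{n+1/2})=\mathbf{0}.$$ Then, with $\mathbf{L}^k$ the angular momentum evaluated at the step-$k$ state, $$\mathbf{L}^{n+1}-\mathbf{L}^n=-h\Big[\boldsymbol{\varphi}^{n+1/2}\times\nabla V(\boldsymbol{\varphi}^{n+1/2})-\boldsymbol{\varphi}^{n+1/2}\times\mathbf{f}_{\boldsymbol{\varphi}}^{n+1/2}-\sum_{i=1}^3\mathbf{d}_i^{n+1/2}\times\mathbf{f}_{\mathbf{d}_i}^{n+1/2}\Big].$$ In particular, if $\nabla V\equiv\mathbf{0}$ and all external generalized forces vanish, then $\mathbf{L}^{n+1}=\mathbf{L}^n$.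
   Context: $\times$ denotes the cross product in $\mathbb{R}^3$. In the director formulation, $\boldsymbol{\varphi}$ is the center-of-mass position and the directors $\mathbf{d}_i$ are the columns of the rotation matrix; $E_i$ are the principal values of the convected Euler tensor, so the kinetic energy is $\frac12 m|\mathbf{v}_{\boldsymbol{\varphi}}|^2+\frac12\sum_i E_i|\mathbf{v}_{\mathbf{d}_i}|^2$. *)

From HB Require Import structures.
From mathcomp Require Import all_boot all_order all_algebra.
From mathcomp Require Import all_classical all_reals all_analysis.
Set Implicit Arguments. Unset Strict Implicit. Unset Printing Implicit Defensive.
Import Order.TTheory GRing.Theory Num.Theory.
Import numFieldNormedType.Exports.
Local Open Scope ring_scope.

Section Defs.
Variable R : realType.
Notation vec3 := 'rV[R]_3.

Definition cmp {n} (u : 'rV[R]_n.+1) (i : nat) : R := u 0 (inord i).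

Definition cross (u v : vec3) : vec3 :=
  \row_(k < 3)
    (if val k == 0%N then cmp u 1 * cmp v 2 - cmp u 2 * cmp v 1
     else if val k == 1%N then cmp u 2 * cmp v 0 - cmp u 0 * cmp v 2
     else cmp u 0 * cmp v 1 - cmp u 1 * cmp v 0).

Definition dot (u v : vec3) : R := \sum_(k < 3) u 0 k * v 0 k.

Definition grad (V : vec3 -> R) (x : vec3) : vec3 :=
  \row_(k < 3) derive V x (delta_mx 0 k).

Definition C1 (V : vec3 -> R) : Prop :=
  (forall x, differentiable V x) /\ continuous (fun x : vec3 => grad V x).

(* internal constraint g_d : (R^3)^3 -> R^6 (directors indexed by 'I_3,
   d 0, d 1, d 2 are d_1, d_2, d_3 of the paper) *)
Definition gd (d : 'I_3 -> vec3) : 'rV[R]_6 :=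
  \row_(k < 6)
    (if val k == 0%N then (dot (d 0) (d 0) - 1) / 2
     else if val k == 1%N then (dot (d 1) (d 1) - 1) / 2
     else if val k == 2%N then (dot (d 2) (d 2) - 1) / 2
     else if val k == 3%N then dot (d 0) (d 1)
     else if val k == 4%N then dot (d 0) (d 2)
     else dot (d 1) (d 2)).

(* Jacobian of g_d at d applied to the velocity (v_1,v_2,v_3) *)
Definition dgd (d v : 'I_3 -> vec3) : 'rV[R]_6 :=
  \row_(k < 6)
    (if val k == 0%N then dot (d 0) (v 0)
     else if val k == 1%N then dot (d 1) (v 1)
     else if val k == 2%N then dot (d 2) (v 2)
     else if val k == 3%N then dot (d 0) (v 1) + dot (v 0) (d 1)
     else if val k == 4%N then dot (d 0) (v 2) + dot (v 0) (d 2)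
     else dot (d 1) (v 2) + dot (v 1) (d 2)).

(* block of (grad g_d(d))^T lambda corresponding to d_i (0-based i;
   lambda components 0-based: cmp lam 0 = lambda_1, ..., cmp lam 5 = lambda_6) *)
Definition fc (d : 'I_3 -> vec3) (lam : 'rV[R]_6) (i : 'I_3) : vec3 :=
  if val i == 0%N then cmp lam 0 *: d 0 + cmp lam 3 *: d 1 + cmp lam 4 *: d 2
  else if val i == 1%N then cmp lam 1 *: d 1 + cmp lam 3 *: d 0 + cmp lam 5 *: d 2
  else cmp lam 2 *: d 2 + cmp lam 4 *: d 0 + cmp lam 5 *: d 1.

Definition angmom (m : R) (E : 'I_3 -> R) (phi vphi : vec3)
  (d vd : 'I_3 -> vec3) : vec3 :=
  cross phi (m *: vphi) + \sum_(i < 3) cross (d i) (E i *: vd i).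

Definition mid (a b : vec3) : vec3 := (1/2 : R) *: (b + a).
Definition midd (a b : 'I_3 -> vec3) : 'I_3 -> vec3 := fun i => mid (a i) (b i).

End Defs.

From HB Require Import structures.
From mathcomp Require Import all_boot all_order all_algebra.
From mathcomp Require Import all_classical all_reals all_analysis.
From mathcomp Require Import ring.
Import Order.TTheory GRing.Theory Num.Theory.
Local Open Scope ring_scope.

(* Every term of the angular momentum is a cross product [a x (c b)], and the
   midpoint rule satisfies the discrete product rule
   [a^{n+1} x b^{n+1} - a^n x b^n = a^{n+1/2} x (b^{n+1} - b^n) + (a^{n+1} - a^n) x b^{n+1/2}].
   Since [a^{n+1} - a^n = h b^{n+1/2}], the last term vanishes, so the change of
   [L] is [h] times the torque of the midpoint forces.  The constraint forces
   exert no torque: [f^c_i] is a combination of the directors with symmetric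
   coefficients, so [sum_i d_i x f^c_i] cancels by antisymmetry. *)

Ltac cross_by_components :=
  apply/rowP => -[[|[|[|?]]] ?]; rewrite /cross /mid /cmp !mxE //=.

Section Cross.
Context {R : realType}.

Lemma crossvv (u : 'rV[R]_3) : cross u u = 0.
Proof. by cross_by_components; ring. Qed.

Lemma cross0r (u : 'rV[R]_3) : cross u 0 = 0.
Proof. by cross_by_components; ring. Qed.

Lemma crossDr (u v w : 'rV[R]_3) : cross u (v + w) = cross u v + cross u w.
Proof. by cross_by_components; ring. Qed.

Lemma crossNr (u v : 'rV[R]_3) : cross u (- v) = - cross u v.
Proof. by cross_by_components; ring. Qed.

Lemma crossZr (c : R) (u v : 'rV[R]_3) : cross u (c *: v) = c *: cross u v.
Proof. by cross_by_components; ring. Qed.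

Lemma crossZl (c : R) (u v : 'rV[R]_3) : cross (c *: u) v = c *: cross u v.
Proof. by cross_by_components; ring. Qed.

Lemma cross_mid_diff (a0 a1 b0 b1 : 'rV[R]_3) :
  cross a1 b1 - cross a0 b0 =
  cross (mid a0 a1) (b1 - b0) + cross (a1 - a0) (mid b0 b1).
Proof. by cross_by_components; field. Qed.

Lemma cross_mid_diff_parallel {h : R} {a0 a1 b0 b1 : 'rV[R]_3} :
  a1 - a0 = h *: mid b0 b1 ->
  cross a1 b1 - cross a0 b0 = cross (mid a0 a1) (b1 - b0).
Proof. by move=> da; rewrite cross_mid_diff da crossZl crossvv scaler0 addr0. Qed.

Lemma sumr_ord3 (V : zmodType) (F : 'I_3 -> V) :
  \sum_(i < 3) F i = F 0 + F 1 + F 2.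
Proof.
rewrite !big_ord_recl big_ord0 addr0 addrA.
by congr (F _ + F _ + F _); apply/val_inj.
Qed.

Lemma constraint_torque_free (d : 'I_3 -> 'rV[R]_3) (lam : 'rV[R]_6) :
  \sum_(i < 3) cross (d i) (fc d lam i) = 0.
Proof. by rewrite sumr_ord3 /fc /=; cross_by_components; ring. Qed.

Lemma angmomE (m : R) (E : 'I_3 -> R) (phi vphi : 'rV[R]_3)
    (d vd : 'I_3 -> 'rV[R]_3) :
  angmom m E phi vphi d vd =
  m *: cross phi vphi + \sum_(i < 3) E i *: cross (d i) (vd i).
Proof. by rewrite /angmom crossZr; under eq_bigr do rewrite crossZr. Qed.

End Cross.

Theorem mainTheorem4 (R : realType) (m : R) (E : 'I_3 -> R) (h : R)
  (V : 'rV[R]_3 -> R)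
  (phi0 phi1 vphi0 vphi1 : 'rV[R]_3) (d0 d1 vd0 vd1 : 'I_3 -> 'rV[R]_3)
  (lam : 'rV[R]_6) (fphi : 'rV[R]_3) (fd : 'I_3 -> 'rV[R]_3) :
  0 < m -> (forall i, 0 < E i) -> 0 < h -> C1 V ->
  phi1 - phi0 = h *: mid vphi0 vphi1 ->
  (forall i, d1 i - d0 i = h *: mid (vd0 i) (vd1 i)) ->
  m *: (vphi1 - vphi0) = - (h *: grad V (mid phi0 phi1)) + h *: fphi ->
  (forall i, E i *: (vd1 i - vd0 i) =
             - (h *: fc (midd d0 d1) lam i) + h *: fd i) ->
  dgd (midd d0 d1) (midd vd0 vd1) = 0 ->
  angmom m E phi1 vphi1 d1 vd1 - angmom m E phi0 vphi0 d0 vd0 =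
    - (h *: (cross (mid phi0 phi1) (grad V (mid phi0 phi1))
             - cross (mid phi0 phi1) fphi
             - \sum_(i < 3) cross (mid (d0 i) (d1 i)) (fd i)))
  /\ ((forall x, grad V x = 0) -> fphi = 0 -> (forall i, fd i = 0) ->
      angmom m E phi1 vphi1 d1 vd1 = angmom m E phi0 vphi0 d0 vd0).
Proof.
move=> _ _ _ _ dphi dd dvphi dvd _.
have dL : angmom m E phi1 vphi1 d1 vd1 - angmom m E phi0 vphi0 d0 vd0 =
    - (h *: (cross (mid phi0 phi1) (grad V (mid phi0 phi1))
             - cross (mid phi0 phi1) fphi
             - \sum_(i < 3) cross (mid (d0 i) (d1 i)) (fd i))).
  rewrite !angmomE opprD addrACA -scalerBr -sumrB.
  rewrite (cross_mid_diff_parallel dphi) -crossZr dvphi.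
  under eq_bigr => i _ do
    rewrite -scalerBr (cross_mid_diff_parallel (dd i)) -crossZr dvd crossDr crossNr !crossZr.
  rewrite big_split sumrN /= -!scaler_sumr.
  rewrite (constraint_torque_free (midd d0 d1)) scaler0 oppr0 add0r.
  by rewrite crossDr crossNr !crossZr !scalerBr !opprD !opprK.
split=> // gradV0 fphi0 fd0; apply/eqP; rewrite -subr_eq0 dL gradV0 fphi0.
rewrite big1 => [|i _]; last by rewrite fd0 cross0r.
by rewrite cross0r !subr0 scaler0 oppr0.
Qed.
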